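(* Let $N=\{1,\dots,n\}$, $\eta>0$, $B\ge1$ an integer. Let $(A(k))_{k\ge0}$ be $n\times n$ matrices, $x(0)\in\mathbb{R}^n$, and $x(k+1)=A(k)x(k)$. Assume: (i) each $A(k)$ is doubly stochastic with positive diagonal entries and all positive entries at least $\eta$; (ii) for every integer $k\ge0$, every permutation $\sigma$ of $N$ with $x_{\sigma(1)}(kB)\ge\cdots\ge x_{\sigma(n)}(kB)$, and every $d\in\{1,\dots,n-1\}$, either $x_{\sigma(d)}(kB)=x_{\sigma(d+1)}(kB)$, or there exist $t\in\{kB,\dots,(k+1)B-1\}$, $i\in\{\sigma(1),\dots,\sigma(d)\}$, $j\in\{\sigma(d+1),\dots,\sigma(n)\}$ with $(i,j)$ or $(j,i)$ in $\mathcal{E}(A(t))$. Then for every integer $k\ge0$ with $V(x(kB))>0$, \[\frac{V(x(kB))-V(x((k+1)B))}{V(x(kB))}\ge\frac{\eta}{2n^2}.\]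
   Context: A matrix is doubly stochastic if it is nonnegative with all row and column sums equal to $1$. For a matrix $A=[a_{ij}]$, $\mathcal{E}(A)$ is the set of directed edges $(j,i)$ (including self-edges) with $a_{ij}>0$. For $x\in\mathbb{R}^n$, $\bar x=\frac1n\sum_ix_i$ and $V(x)=\sum_i(x_i-\bar x)^2$. *)

From mathcomp Require Import all_boot all_order all_algebra all_fingroup.
Set Implicit Arguments. Unset Strict Implicit. Unset Printing Implicit Defensive.
Import Order.TTheory GRing.Theory Num.Theory.
Local Open Scope ring_scope.

(* Indices N = {1..n} are represented by 'I_n = {0..n-1}. *)

Definition doubly_stochastic (R : realFieldType) (n : nat) (A : 'M[R]_n) : Prop :=
  (forall i j, 0 <= A i j) /\
  (forall i, \sum_(j < n) A i j = 1) /\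
  (forall j, \sum_(i < n) A i j = 1).

Definition in_edges (R : realFieldType) (n : nat) (A : 'M[R]_n) (e : 'I_n * 'I_n) : Prop :=
  0 < A e.2 e.1.

Definition mean (R : realFieldType) (n : nat) (x : 'cV[R]_n) : R :=
  (\sum_(i < n) x i 0) / n%:R.

Definition Vdis (R : realFieldType) (n : nat) (x : 'cV[R]_n) : R :=
  \sum_(i < n) (x i 0 - mean x) ^+ 2.

From mathcomp Require Import all_boot all_order all_algebra all_fingroup.
From mathcomp Require Import ring lra zify.

(* Sort x(kB) decreasingly as z_0 >= ... >= z_(n-1) and call z_d - z_(d+1) the gap at
   cut d.  Until some A(t) has an edge across cut d, averaging keeps the entries above
   the cut >= z_d and those below <= z_(d+1).  The one-step decrease of V is
   sum_l sum_c a_lc (x_c - (A x)_l)^2, and at the first step of the block where cut d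
   is crossed, from row l say, row l has two positive entries straddling every cut
   first crossed from l at that step; since positive entries are >= eta, row l pays
   eta/2 times the sum of the squared gaps of those cuts.  Hence the block decreases V
   by at least eta/2 sum_d gap_d^2, while V(x(kB)) <= n (z_0 - z_(n-1))^2
   <= n^2 sum_d gap_d^2 by Cauchy-Schwarz. *)

Set Implicit Arguments.
Unset Strict Implicit.
Unset Printing Implicit Defensive.

Import Order.TTheory GRing.Theory Num.Theory.
Local Open Scope ring_scope.

Lemma exists_sorting_perm (R : realFieldType) (n : nat) (f : 'I_n -> R) :
  exists sigma : 'S_n, forall p q : 'I_n, (p <= q)%N -> f (sigma q) <= f (sigma p).
Proof.
pose r i j := f j <= f i.
have r_total : total r by move=> i j; rewrite /r le_total.
have r_trans : transitive r by move=> i j k ji kj; apply: le_trans kj ji.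
set s := sort r (enum 'I_n).
have : perm_eq s (ord_tuple n) by rewrite /s perm_sort val_ord_tuple.
case/tuple_permP=> sigma s_def; exists sigma => p q pq.
have nth_s (i : 'I_n) : nth (sigma p) s i = sigma i.
  rewrite s_def /= (nth_map i) ?size_enum_ord // nth_ord_enum.
  by rewrite (tnth_nth (sigma p)) /= nth_ord_enum.
have size_s : size s = n by rewrite s_def size_tuple.
have := sorted_leq_nth r_trans (fun i => le_refl _) (sigma p) (sort_sorted r_total (enum 'I_n)).
by move=> /(_ p q); rewrite !inE -/s size_s !ltn_ord !nth_s => /(_ isT isT pq).
Qed.

Section Sums.
Variable R : realFieldType.

Lemma sum_sqr_le_sqr_sum (I : Type) (r : seq I) (P : pred I) (f : I -> R) :
  (forall i, P i -> 0 <= f i) ->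
  \sum_(i <- r | P i) f i ^+ 2 <= (\sum_(i <- r | P i) f i) ^+ 2.
Proof.
move=> f_ge0; elim: r => [|i r IH]; first by rewrite !big_nil expr0n.
rewrite !big_cons; case: ifP => // Pi.
have : 0 <= \sum_(j <- r | P j) f j by apply: sumr_ge0.
have := f_ge0 i Pi; nra.
Qed.

Lemma sqr_sum_le_mul_sum_sqr (N : nat) (f : nat -> R) :
  (\sum_(0 <= d < N) f d) ^+ 2 <= N%:R * \sum_(0 <= d < N) f d ^+ 2.
Proof.
set S := \sum_(0 <= d < N) f d; set Q := \sum_(0 <= d < N) f d ^+ 2.
have inner d : \sum_(0 <= e < N) (f d - f e) ^+ 2 = f d ^+ 2 *+ N - 2 * f d * S + Q.
  transitivity (\sum_(0 <= e < N) (f d ^+ 2 - 2 * f d * f e + f e ^+ 2)).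
    by apply: eq_bigr => e _; ring.
  by rewrite big_split /= sumrB sumr_const_nat subn0 -mulr_sumr.
(* Lagrange's identity: the double sum of squared differences is 2 (N Q - S^2). *)
have lagrange : \sum_(0 <= d < N) \sum_(0 <= e < N) (f d - f e) ^+ 2 =
    2 * (Q *+ N) - 2 * S ^+ 2.
  rewrite (eq_bigr _ (fun d _ => inner d)) big_split /= sumrB sumr_const_nat subn0.
  by rewrite -sumrMnl -mulr_suml -mulr_sumr -/S -/Q; ring.
have : 0 <= \sum_(0 <= d < N) \sum_(0 <= e < N) (f d - f e) ^+ 2.
  by apply: sumr_ge0 => d _; apply: sumr_ge0 => e _; apply: sqr_ge0.
by rewrite lagrange mulr_natl; lra.
Qed.

Lemma sum_le_sum_cover (I : finType) (N : nat) (F : nat -> R) (P : I -> pred nat) :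
  (forall d, 0 <= F d) -> (forall d, (d < N)%N -> F d != 0 -> exists k, P k d) ->
  \sum_(0 <= d < N) F d <= \sum_k \sum_(0 <= d < N | P k d) F d.
Proof.
move=> F_ge0 covered.
under [X in _ <= X]eq_bigr do rewrite big_mkcond.
rewrite exchange_big /=; apply: ler_sum_nat => d /andP[_ dN].
have [->|/(covered d dN)[k Pkd]] := eqVneq (F d) 0.
  by apply: sumr_ge0 => k _; case: ifP.
rewrite (bigD1 k) //= Pkd lerDl; apply: sumr_ge0 => i _; case: ifP => //.
Qed.

Lemma sum_gaps_le (z : nat -> R) (S : pred nat) (N : nat) (u w : R) :
  {homo z : d e / (d <= e)%N >-> e <= d} -> w <= u ->
  (forall d, (d < N)%N -> S d -> z d <= u /\ w <= z d.+1) ->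
  \sum_(0 <= d < N | S d) (z d - z d.+1) <= u - w.
Proof.
move=> z_dec; elim: N w => [|N IH] w wu bounds; first by rewrite big_geq // subr_ge0.
rewrite big_mkcond big_nat_recr //= -big_mkcond /=.
case: ifP => SN; last first.
  by rewrite addr0; apply: IH => // d dN; apply: bounds; apply: ltnW.
have [zN_u w_zN] := bounds N (ltnSn N) SN.
suff : \sum_(0 <= d < N | S d) (z d - z d.+1) <= u - z N by lra.
apply: IH => // d dN Sd; split; first by have [] := bounds d (ltnW dN) Sd.
exact: z_dec.
Qed.

End Sums.

Section WeightedAverage.
Variables (R : realFieldType) (n : nat) (a : 'I_n -> R).
Hypotheses (a_ge0 : forall j, 0 <= a j) (a_sum1 : \sum_j a j = 1).

Lemma ler_wavg (v : 'I_n -> R) c :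
  (forall j, 0 < a j -> c <= v j) -> c <= \sum_j a j * v j.
Proof.
move=> lb; rewrite -[c]mul1r -a_sum1 mulr_suml; apply: ler_sum => j _.
have [<-|aj] := eqVneq 0 (a j); first by rewrite !mul0r.
apply: ler_wpM2l; first exact: a_ge0.
by apply: lb; rewrite lt_def eq_sym aj a_ge0.
Qed.

Lemma wavg_ler (v : 'I_n -> R) c :
  (forall j, 0 < a j -> v j <= c) -> \sum_j a j * v j <= c.
Proof.
move=> ub; rewrite -[X in X <= _]opprK -[c]opprK lerN2 -sumrN.
under eq_bigr do rewrite -mulrN.
by apply: ler_wavg => j /ub; rewrite lerN2.
Qed.

Lemma sqr_diff_le_wsum_sqr (eta : R) (v : 'I_n -> R) (y : R) (p q : 'I_n) :
  0 <= eta -> eta <= a p -> eta <= a q -> q != p ->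
  eta / 2 * (v p - v q) ^+ 2 <= \sum_i a i * (v i - y) ^+ 2.
Proof.
move=> eta_ge0 eta_p eta_q qp.
have two_terms : a p * (v p - y) ^+ 2 + a q * (v q - y) ^+ 2 <= \sum_i a i * (v i - y) ^+ 2.
  rewrite (bigD1 p) //= (bigD1 q) //= addrA lerDl.
  by apply: sumr_ge0 => i _; rewrite mulr_ge0 ?sqr_ge0.
apply: le_trans two_terms.
apply: le_trans (lerD (ler_wpM2r (sqr_ge0 _) eta_p) (ler_wpM2r (sqr_ge0 _) eta_q)).
have parallelogram : (v p - v q) ^+ 2 <= 2 * ((v p - y) ^+ 2 + (v q - y) ^+ 2).
  by rewrite -subr_ge0 (_ : _ - _ = (v p + v q - 2 * y) ^+ 2); [apply: sqr_ge0 | ring].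
rewrite -mulrDr; apply: le_trans (ler_wpM2l _ parallelogram) _; first by rewrite divr_ge0.
by rewrite mulrA divfK ?pnatr_eq0.
Qed.

End WeightedAverage.

Section Variance.
Variables (R : realFieldType) (n : nat).
Implicit Types (x : 'cV[R]_n) (A : 'M[R]_n).

Lemma sum_mean x : \sum_(i < n) x i 0 = mean x * n%:R.
Proof.
rewrite /mean; case: n => [|m] in x *; first by rewrite mulr0 big_ord0.
by rewrite divfK // pnatr_eq0.
Qed.

Lemma VdisE x : Vdis x = \sum_(i < n) x i 0 ^+ 2 - mean x ^+ 2 * n%:R.
Proof.
rewrite /Vdis.
transitivity (\sum_(i < n) x i 0 ^+ 2 - 2 * mean x * \sum_(i < n) x i 0
              + \sum_(i < n) mean x ^+ 2).
  by rewrite mulr_sumr -sumrB -big_split /=; apply: eq_bigr => i _; ring.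
by rewrite sum_mean sumr_const card_ord; ring.
Qed.

Lemma mean_mul A x : doubly_stochastic A -> mean (A *m x) = mean x.
Proof.
move=> [_ [_ col_sum]]; rewrite /mean; congr (_ / _).
under eq_bigr do rewrite mxE.
by rewrite exchange_big /=; apply: eq_bigr => j _; rewrite -mulr_suml col_sum mul1r.
Qed.

(* (A x)_l is the A_l-weighted mean of x; as the columns of A also sum to 1, V drops by
   the sum of the rows' weighted variances. *)
Lemma Vdis_sub_mul A x : doubly_stochastic A ->
  Vdis x - Vdis (A *m x) =
  \sum_(l < n) \sum_(c < n) A l c * (x c 0 - (A *m x) l 0) ^+ 2.
Proof.
move=> dsA; rewrite !VdisE mean_mul //; case: dsA => [_ [row_sum col_sum]].
have row l : \sum_(c < n) A l c * (x c 0 - (A *m x) l 0) ^+ 2 =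
    \sum_(c < n) A l c * x c 0 ^+ 2 - (A *m x) l 0 ^+ 2.
  transitivity (\sum_(c < n) A l c * x c 0 ^+ 2
      - 2 * (A *m x) l 0 * \sum_(c < n) A l c * x c 0
      + (A *m x) l 0 ^+ 2 * \sum_(c < n) A l c).
    by rewrite !mulr_sumr -sumrB -big_split /=; apply: eq_bigr => c _; ring.
  have mulE : \sum_(c < n) A l c * x c 0 = (A *m x) l 0 by rewrite mxE.
  by rewrite row_sum mulE; ring.
rewrite (eq_bigr _ (fun l _ => row l)) sumrB exchange_big /=.
under [X in _ = X - _]eq_bigr do rewrite -mulr_suml col_sum mul1r.
ring.
Qed.

Lemma Vdis_le_range x (lo hi : R) :
  (forall r, lo <= x r 0 <= hi) -> Vdis x <= n%:R * (hi - lo) ^+ 2.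
Proof.
case: n x => [|m] x x_range; first by rewrite /Vdis big_ord0 mul0r.
have sum_cst (c : R) : \sum_(r < m.+1) c = c * m.+1%:R.
  by rewrite sumr_const card_ord mulr_natr.
have m_pos : 0 < m.+1%:R :> R by rewrite ltr0n.
have mean_range : lo <= mean x <= hi.
  rewrite /mean ler_pdivlMr // ler_pdivrMr // -!sum_cst.
  by apply/andP; split; apply: ler_sum => r _; have /andP[] := x_range r.
rewrite /Vdis mulrC -sum_cst; apply: ler_sum => r _; set u := x r 0 - mean x.
have u_range : - (hi - lo) <= u <= hi - lo.
  move: (x_range r) mean_range; rewrite /u => /andP[? ?] /andP[? ?].
  by apply/andP; split; lra.
rewrite -subr_ge0 (_ : _ - _ = (hi - lo - u) * (hi - lo + u)); last by ring.
by case/andP: u_range => ? ?; apply: mulr_ge0; lra.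
Qed.

End Variance.

Section Cuts.
Variables (R : realFieldType) (n : nat) (rk : 'I_n -> nat).

Definition separated (d : nat) (i j : 'I_n) : bool := (rk i <= d)%N != (rk j <= d)%N.

Definition crosses_row (A : 'M[R]_n) (d : nat) (l : 'I_n) : bool :=
  [exists j, (0 < A l j) && separated d l j].

Definition crosses (A : 'M[R]_n) (d : nat) : bool := [exists l, crosses_row A d l].

Definition split_at (d : nat) (hi lo : R) (v : 'I_n -> R) : Prop :=
  (forall r, (rk r <= d)%N -> hi <= v r) /\ (forall r, (d < rk r)%N -> v r <= lo).

Lemma split_at_mul (A : 'M[R]_n) (w : 'cV[R]_n) d hi lo :
  (forall i j, 0 <= A i j) -> (forall i, \sum_j A i j = 1) -> ~~ crosses A d ->
  split_at d hi lo (fun r => w r 0) -> split_at d hi lo (fun r => (A *m w) r 0).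
Proof.
move=> A_ge0 row_sum no_cross [w_hi w_lo].
have same_side r j : 0 < A r j -> ~~ separated d r j.
  move=> Arj; move: no_cross; apply: contra => sep.
  by apply/existsP; exists r; apply/existsP; exists j; rewrite Arj.
split=> r rk_r; rewrite mxE.
- apply: ler_wavg => // j /same_side; rewrite /separated rk_r.
  by case: leqP => // jd _; apply: w_hi.
- apply: wavg_ler => // j /same_side; rewrite /separated leqNgt rk_r.
  by case: leqP => // jd _; apply: w_lo.
Qed.

(* The cuts of S crossed from row l all lie between the lowest- and highest-ranked
   neighbours p and q of l, so their gaps add up to at most v p - v q. *)
Lemma row_bound (eta : R) (a v : 'I_n -> R) (l : 'I_n) (y : R) (z : nat -> R)
    (S : pred nat) (N : nat) :
  0 <= eta -> (forall i, 0 <= a i) -> 0 < a l -> (forall i, 0 < a i -> eta <= a i) ->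
  {homo z : d e / (d <= e)%N >-> e <= d} ->
  (forall d, S d -> [exists j, (0 < a j) && separated d l j] /\ split_at d (z d) (z d.+1) v) ->
  eta / 2 * \sum_(0 <= d < N | S d) (z d - z d.+1) ^+ 2 <= \sum_i a i * (v i - y) ^+ 2.
Proof.
move=> eta_ge0 a_ge0 al_gt0 a_eta z_dec cut.
case: (pickP [pred d : 'I_N | S d]) => [d0 /= Sd0 | noS]; last first.
  rewrite big1_seq ?mulr0; first by apply: sumr_ge0 => i _; rewrite mulr_ge0 ?sqr_ge0.
  move=> d /andP[Sd]; rewrite mem_index_iota => /andP[_ dN].
  by have := noS (Ordinal dN); rewrite /= Sd.
have [p ap p_min] : exists2 p, 0 < a p & forall j, 0 < a j -> (rk p <= rk j)%N.
  by case: (@arg_minnP _ l (fun i => 0 < a i) rk al_gt0) => p; exists p.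
have [q aq q_max] : exists2 q, 0 < a q & forall j, 0 < a j -> (rk j <= rk q)%N.
  by case: (@arg_maxnP _ l (fun i => 0 < a i) rk al_gt0) => q; exists q.
have between d : S d -> (rk p <= d)%N /\ (d < rk q)%N.
  case/cut => /existsP[j /andP[aj]]; rewrite /separated.
  have := p_min _ aj; have := p_min _ al_gt0; have := q_max _ aj; have := q_max _ al_gt0.
  by case: (leqP (rk l) d); case: (leqP (rk j) d) => //= *; split; lia.
have vp_hi d : S d -> z d <= v p.
  by move=> Sd; apply: (cut d Sd).2.1; have [] := between d Sd.
have vq_lo d : S d -> v q <= z d.+1.
  by move=> Sd; apply: (cut d Sd).2.2; have [] := between d Sd.
have vqp : v q <= v p.
  by apply: le_trans (vq_lo _ Sd0) (le_trans (z_dec _ _ (leqnSn d0)) (vp_hi _ Sd0)).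
have gaps := sum_gaps_le z_dec vqp (fun d _ Sd => conj (vp_hi d Sd) (vq_lo d Sd)).
have sqr_gaps : \sum_(0 <= d < N | S d) (z d - z d.+1) ^+ 2 <= (v p - v q) ^+ 2.
  apply: le_trans (@sum_sqr_le_sqr_sum _ _ _ S (fun d => z d - z d.+1) _) _.
    by move=> d _; rewrite subr_ge0 z_dec.
  by rewrite ler_sqr ?nnegrE ?subr_ge0 // sumr_ge0 // => d _; rewrite subr_ge0 z_dec.
have qp : q != p.
  by have [pd0 d0q] := between _ Sd0; apply/eqP => qp; move: d0q; rewrite qp; lia.
apply: le_trans (sqr_diff_le_wsum_sqr a_ge0 v y eta_ge0 (a_eta _ ap) (a_eta _ aq) qp).
by rewrite ler_wpM2l // divr_ge0.
Qed.

End Cuts.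

Section OrderStatistics.
Variables (R : realFieldType) (n : nat) (w : 'cV[R]_n.+1) (sigma : 'S_n.+1).
Hypothesis w_sorted : forall p q : 'I_n.+1, (p <= q)%N -> w (sigma q) 0 <= w (sigma p) 0.

Definition sort_rank (r : 'I_n.+1) : nat := (sigma^-1)%g r.

(* The d-th largest entry of w, counting from 0 and frozen at the smallest one for d >= n. *)
Definition order_stat (d : nat) : R := w (sigma (inord (minn d n))) 0.

Lemma order_stat_ord (d : 'I_n.+1) : order_stat d = w (sigma d) 0.
Proof. by rewrite /order_stat (minn_idPl (leq_ord d)) inord_val. Qed.

Lemma order_stat_nonincr : {homo order_stat : d e / (d <= e)%N >-> e <= d}.
Proof. by move=> d e de; apply: w_sorted; rewrite !inordK ?ltnS ?geq_minr //; lia. Qed.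

Lemma order_stat_rank r : order_stat (sort_rank r) = w r 0.
Proof.
by rewrite /order_stat (minn_idPl _) ?inord_val ?permKV // -ltnS ltn_ord.
Qed.

Lemma order_stat_le r d : (sort_rank r <= d)%N -> order_stat d <= w r 0.
Proof. by rewrite -order_stat_rank; apply: order_stat_nonincr. Qed.

Lemma le_order_stat r d : (d <= sort_rank r)%N -> w r 0 <= order_stat d.
Proof. by rewrite -order_stat_rank; apply: order_stat_nonincr. Qed.

(* Every entry lies between the extreme order statistics, whose distance telescopes
   into the gaps; Cauchy-Schwarz then bounds its square by n times their squares. *)
Lemma Vdis_le_sum_gaps :
  Vdis w <= n.+1%:R ^+ 2 * \sum_(0 <= d < n) (order_stat d - order_stat d.+1) ^+ 2.
Proof.
set G := \sum_(0 <= d < n) _.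
have G_ge0 : 0 <= G by apply: sumr_ge0 => d _; apply: sqr_ge0.
have range r : order_stat n <= w r 0 <= order_stat 0.
  by rewrite order_stat_le ?le_order_stat // -ltnS ltn_ord.
have telescope : \sum_(0 <= d < n) (order_stat d - order_stat d.+1) = order_stat 0 - order_stat n.
  by rewrite (telescope_sumr_eq (fun d => - order_stat d)) // => *; rewrite opprK addrC.
have := sqr_sum_le_mul_sum_sqr n (fun d => order_stat d - order_stat d.+1).
rewrite telescope -/G => cauchy_schwarz.
apply: le_trans (Vdis_le_range range) _.
rewrite (expr2 (n.+1%:R : R)) -mulrA ler_wpM2l //.
by apply: le_trans cauchy_schwarz _; rewrite ler_wpM2r // ler_nat.
Qed.

End OrderStatistics.

Section Block.
Variables (R : realFieldType) (n : nat) (eta : R) (A : nat -> 'M[R]_n.+1)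
  (x : nat -> 'cV[R]_n.+1) (T0 B : nat) (sigma : 'S_n.+1).
Hypotheses (eta_ge0 : 0 <= eta) (x_next : forall t, x t.+1 = A t *m x t)
  (A_ds : forall t, doubly_stochastic (A t)) (A_diag : forall t i, 0 < A t i i)
  (A_eta : forall t i j, 0 < A t i j -> eta <= A t i j)
  (x_sorted : forall p q : 'I_n.+1, (p <= q)%N -> x T0 (sigma q) 0 <= x T0 (sigma p) 0)
  (cut_crossed : forall d d1 : 'I_n.+1, val d1 = (val d).+1 ->
     x T0 (sigma d) 0 = x T0 (sigma d1) 0
     \/ exists (t : nat) (p q : 'I_n.+1),
          [/\ (T0 <= t)%N, (t < T0 + B)%N, (p <= d)%N, (d < q)%N &
              in_edges (A t) (sigma p, sigma q) \/ in_edges (A t) (sigma q, sigma p)]).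

Local Notation rk := (sort_rank sigma).
Local Notation z := (order_stat (x T0) sigma).

Let first_crossing (i : 'I_B) (l : 'I_n.+1) (d : nat) : bool :=
  crosses_row rk (A (T0 + i)) d l
  && [forall i' : 'I_B, (i' < i)%N ==> ~~ crosses rk (A (T0 + i')) d].

Lemma sort_rank_perm (p : 'I_n.+1) : rk (sigma p) = p.
Proof. by rewrite /sort_rank permK. Qed.

Lemma split_before (i : nat) (d : nat) :
  (forall i', (i' < i)%N -> ~~ crosses rk (A (T0 + i')) d) ->
  split_at rk d (z d) (z d.+1) (fun r => x (T0 + i) r 0).
Proof.
elim: i => [_|i IH earlier].
  by rewrite addn0; split=> r rd; [exact: order_stat_le | exact: le_order_stat].
have [A_ge0 [row_sum _]] := A_ds (T0 + i).
rewrite addnS x_next; apply: split_at_mul => //; first exact: earlier.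
by apply: IH => i' /ltnW; apply: earlier.
Qed.

Lemma gap_crossed d : (d < n)%N -> z d != z d.+1 -> exists i : 'I_B, crosses rk (A (T0 + i)) d.
Proof.
move=> dn gap.
have d_ord : (d < n.+1)%N by apply: ltnW.
have succ : val (inord d.+1 : 'I_n.+1) = (val (inord d : 'I_n.+1)).+1 by rewrite /= !inordK.
case: (cut_crossed succ) => [same | [t [p [q [t_lo t_hi]]]]].
  by move: gap; rewrite -!(order_stat_ord (x T0)) !inordK // in same; rewrite same eqxx.
rewrite inordK // => pd dq edge.
have tB : (t - T0 < B)%N by lia.
exists (Ordinal tB); rewrite /= subnKC //; apply/existsP.
case: edge; rewrite /in_edges /= => edge.
  exists (sigma q); apply/existsP; exists (sigma p).
  by rewrite edge /separated !sort_rank_perm pd leqNgt dq.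
exists (sigma p); apply/existsP; exists (sigma q).
by rewrite edge /separated !sort_rank_perm pd leqNgt dq.
Qed.

(* Charge each gap to the first step of the block and a row where its cut is crossed. *)
Lemma gap_first_crossing d : (d < n)%N -> z d - z d.+1 != 0 ->
  exists il : 'I_B * 'I_n.+1, first_crossing il.1 il.2 d.
Proof.
rewrite subr_eq0 => dn /(gap_crossed dn)[i0 crosses_i0].
case: (@arg_minnP _ i0 (fun i : 'I_B => crosses rk (A (T0 + i)) d) val crosses_i0).
move=> i /existsP[l crosses_l] i_min; exists (i, l).
rewrite /first_crossing /= crosses_l; apply/forallP => i'; apply/implyP => i'i.
by apply/negP => /i_min; rewrite leqNgt i'i.
Qed.

Lemma first_crossing_bound (i : 'I_B) (l : 'I_n.+1) :
  eta / 2 * \sum_(0 <= d < n | first_crossing i l d) (z d - z d.+1) ^+ 2 <=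
  \sum_c A (T0 + i) l c * (x (T0 + i) c 0 - (A (T0 + i) *m x (T0 + i)) l 0) ^+ 2.
Proof.
have [A_ge0 _] := A_ds (T0 + i).
apply: (row_bound (rk := rk) (a := A (T0 + i) l) (v := fun c => x (T0 + i) c 0)) => //.
- exact: A_eta.
- exact: order_stat_nonincr.
move=> d /andP[crosses_l /forallP earlier]; split; first exact: crosses_l.
apply: split_before => i' i'i; have i'B : (i' < B)%N := ltn_trans i'i (ltn_ord i).
by have := earlier (Ordinal i'B); rewrite /= i'i.
Qed.

Lemma Vdis_drop_block :
  Vdis (x T0) - Vdis (x (T0 + B)) =
  \sum_(i < B) \sum_l \sum_c
     A (T0 + i) l c * (x (T0 + i) c 0 - (A (T0 + i) *m x (T0 + i)) l 0) ^+ 2.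
Proof.
transitivity (\sum_(i < B) (Vdis (x (T0 + i)) - Vdis (x (T0 + i).+1))).
  rewrite -(big_mkord xpredT (fun i => Vdis (x (T0 + i)) - Vdis (x (T0 + i).+1))).
  rewrite (telescope_sumr_eq (fun i => - Vdis (x (T0 + i)))) // => [|i _].
    by rewrite addn0 opprK addrC.
  by rewrite addnS opprK addrC.
by apply: eq_bigr => i _; rewrite x_next Vdis_sub_mul.
Qed.

Lemma block_decrease :
  eta / 2 * \sum_(0 <= d < n) (z d - z d.+1) ^+ 2 <= Vdis (x T0) - Vdis (x (T0 + B)).
Proof.
rewrite Vdis_drop_block.
have cover := @sum_le_sum_cover R ('I_B * 'I_n.+1)%type n (fun d => (z d - z d.+1) ^+ 2)
  (fun il d => first_crossing il.1 il.2 d) (fun d => sqr_ge0 _).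
apply: le_trans (ler_wpM2l _ (cover _)) _.
- by rewrite divr_ge0.
- by move=> d dn; rewrite sqrf_eq0; apply: gap_first_crossing.
rewrite -(pair_bigA _ (fun i l => \sum_(0 <= d < n | first_crossing i l d) (z d - z d.+1) ^+ 2)).
rewrite mulr_sumr; apply: ler_sum => i _; rewrite mulr_sumr; apply: ler_sum => l _.
exact: first_crossing_bound.
Qed.

End Block.

Theorem lemma5 (R : realFieldType) (n : nat) (eta : R) (B : nat)
  (A : nat -> 'M[R]_n) (x : nat -> 'cV[R]_n) :
  0 < eta -> (1 <= B)%N ->
  (forall k, x k.+1 = A k *m x k) ->
  (forall k, doubly_stochastic (A k)) ->
  (forall k i, 0 < A k i i) ->
  (forall k i j, 0 < A k i j -> eta <= A k i j) ->
  (forall (k : nat) (sigma : 'S_n),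
     (forall p q : 'I_n, (p <= q)%N -> x (k * B)%N (sigma q) 0 <= x (k * B)%N (sigma p) 0) ->
     forall d : 'I_n, forall d1 : 'I_n, val d1 = (val d).+1 ->
       x (k * B)%N (sigma d) 0 = x (k * B)%N (sigma d1) 0
       \/ exists (t : nat) (p q : 'I_n),
            [/\ (k * B <= t)%N, (t < k.+1 * B)%N, (p <= d)%N, (d < q)%N &
                in_edges (A t) (sigma p, sigma q) \/ in_edges (A t) (sigma q, sigma p)]) ->
  forall k : nat, 0 < Vdis (x (k * B)%N) ->
    eta / (2 * (n%:R) ^+ 2) <=
      (Vdis (x (k * B)%N) - Vdis (x (k.+1 * B)%N)) / Vdis (x (k * B)%N).
Proof.
move=> eta_gt0 _ x_next A_ds A_diag A_eta cut k V_gt0.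
case: n A x x_next A_ds A_diag A_eta cut V_gt0 => [|m] A x x_next A_ds A_diag A_eta cut V_gt0.
  by move: V_gt0; rewrite /Vdis big_ord0 ltxx.
have [sigma sorted] := exists_sorting_perm (fun i => x (k * B)%N i 0).
have := cut k sigma sorted; rewrite mulSn [(B + _)%N]addnC => cut_k.
have drop := block_decrease (ltW eta_gt0) x_next A_ds A_diag A_eta sorted cut_k.
have spread := Vdis_le_sum_gaps sorted.
set G := \sum_(0 <= d < m) _ in drop spread.
rewrite ler_pdivlMr //.
apply: le_trans (ler_wpM2l _ spread) _.
  by apply: divr_ge0; [exact: ltW | rewrite mulr_ge0 ?sqr_ge0].
suff -> : eta / (2 * m.+1%:R ^+ 2) * (m.+1%:R ^+ 2 * G) = eta / 2 * G by [].
by field; rewrite addrC natr1 pnatr_eq0.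
Qed.
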